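(* The On-CT-RSD mechanism is universally friendship-truthful on every instance with $\phi_{\min}>1$ whose friendship graph $(N,F^* )$ has maximum degree $1$.
   Context: Instance: agents $N$, $n=|N|$ plots $\mathcal V$, undirected plot graph $(\mathcal V,\mathcal E)$, valuations $u_i:\mathcal V\to[0,1]\cap\mathbb Q$, reciprocal directed friendship relation $F$ with weights $\phi_{i,j}\in\mathbb Q_{\ge0}$; $F^*=\{\{i,j\}:(i,j)\in F\}$; $\phi_{\min}=\min_{(i,j)\in F}\phi_{i,j}$. For an allocation (bijection) $A:N\to\mathcal V$, $U_i(A)=u_i(A(i))+\sum_{(i,j)\in F}\phi_{i,j}\mathbb I(\{A(i),A(j)\}\in\mathcal E)$. On-CT-RSD: repeatedly a uniformly random agent among those who have not yet picked is selected; she picks an available plot and may declare another not-yet-picked agent as her friend, in which case that agent picks an available plot next (without declaring a friend); this continues until all agents have plots. A randomized mechanism is universally friendship-truthful if, for every choice of its random bits (even if known to the agents), no agent can increase her utility by misreporting friendship information, regardless of what other agents report and which plots they pick. *)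

From mathcomp Require Import all_boot all_order all_algebra.
Set Implicit Arguments. Unset Strict Implicit. Unset Printing Implicit Defensive.
Import Order.TTheory GRing.Theory Num.Theory.
Local Open Scope ring_scope.

(* An event of a run: (agent who picked, plot she picked, friend she declared
   -- None if she declared nobody or picked as a declared friend). *)
Definition event (N V : finType) := (N * V * option N)%type.
Definition hist (N V : finType) := seq (event N V).

Definition agents_of (N V : finType) (h : hist N V) : seq N := [seq e.1.1 | e <- h].
Definition plots_of (N V : finType) (h : hist N V) : seq V := [seq e.1.2 | e <- h].
Definition remaining (N V : finType) (h : hist N V) : {set N} :=
  [set a | a \notin agents_of h].

(* One step of On-CT-RSD.
   c k R  : the k-th random draw, selecting an agent of the set R of agents
            that have not picked yet (the fixed random bits);
   pick a h : plot that agent a picks when the history so far is h;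
   decl a h p : friend agent a declares after picking p at history h. *)
Definition ct_step (N V : finType) (c : nat -> {set N} -> N)
  (pick : N -> hist N V -> V) (decl : N -> hist N V -> V -> option N)
  (st : hist N V * option N * nat) : hist N V * option N * nat :=
  let: (h, pend, k) := st in
  let R := remaining h in
  if R == set0 then st else
  match pend with
  | Some a => (rcons h (a, pick a h, None), None, k)
  | None =>
      let a := c k R in
      let p := pick a h in
      let d := match decl a h p with
               | Some b => if (b \in R) && (b != a) then Some b else None
               | None => None
               end in
      (rcons h (a, p, d), d, k.+1)
  end.

(* The complete history of a run (every step places one agent). *)
Definition on_ct_rsd (N V : finType) (c : nat -> {set N} -> N)
  (pick : N -> hist N V -> V) (decl : N -> hist N V -> V -> option N) : hist N V :=
  (iter #|N| (ct_step c pick decl) ([::], None, 0%N)).1.1.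

Definition alloc_of (N V : finType) (h : hist N V) (a : N) : option V :=
  ohead [seq e.1.2 | e <- h & e.1.1 == a].

Definition U (N V : finType) (u : N -> V -> rat) (F : rel N) (phi : N -> N -> rat)
  (E : rel V) (A : N -> option V) (i : N) : rat :=
  match A i with
  | Some p => u i p + \sum_(j | F i j) phi i j *
                        (match A j with Some q => (E p q)%:R | None => 0 end)
  | None => 0
  end.

Definition myopic (N V : finType) (u : N -> V -> rat) (F : rel N) (phi : N -> N -> rat)
  (E : rel V) (a : N) (h : hist N V) (p : V) : rat :=
  u a p + \sum_(e <- h | F a e.1.1) phi a e.1.1 * (E p e.1.2)%:R.

Definition truthful_decl (N V : finType) (F : rel N) (i : N) (h : hist N V) (p : V)
  : option N := [pick j | F i j && (j \notin agents_of h)].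

From mathcomp Require Import all_boot all_order all_algebra.
From mathcomp Require Import zify lra.
Import Order.TTheory GRing.Theory Num.Theory.
Set Implicit Arguments. Unset Strict Implicit.

(* Agent i's declaration is consulted only at the step where i is drawn at random (an agent
   placed as a declared friend declares nobody), so the deviating and the truthful run agree
   up to that step, where i picks the same plot p in both.  Afterwards only the plot of i's
   unique friend j can differ, and only if j has not picked yet.  Under truthful declaration
   j picks right away, while every plot she could get later in the deviating run is still
   free; her myopic utility is u_j(q) + phi_{j,i} [q adjacent to p] with u_j in [0,1] and
   phi_{j,i} > 1, so she picks a plot adjacent to p whenever the deviating run could give
   her one. *)

Lemma uniq_size_le_card (T : finType) (s : seq T) : uniq s -> (size s <= #|T|)%N.
Proof. by move=> us; rewrite -(card_uniqP us) max_card. Qed.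

Lemma iter_eq_or_hit (T : Type) (f g : T -> T) (P : pred T) :
  (forall z, ~~ P z -> f z = g z) -> forall n x, iter n f x = iter n g x \/
  exists t m, [/\ n = (m + t.+1)%N, iter t f x = iter t g x & P (iter t f x)].
Proof.
move=> fg; elim=> [|n IH] x; first by left.
have [e|[t [m [-> e hit]]]] := IH x; last by right; exists t, m.+1; rewrite addSn.
have [hit|miss] := boolP (P (iter n f x)); first by right; exists n, 0%N.
by left; rewrite /= -e fg.
Qed.

Section Allocation.
Variables N V : finType.
Implicit Types (h r : hist N V) (e : event N V) (a : N).

Lemma alloc_of_catl h r a : a \in agents_of h -> alloc_of (h ++ r) a = alloc_of h a.
Proof.
rewrite /alloc_of filter_cat map_cat => /mapP [e he ea].
have : e.1.2 \in [seq e.1.2 | e <- h & e.1.1 == a].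
  by apply: map_f; rewrite mem_filter -ea eqxx.
by case: [seq e.1.2 | e <- h & e.1.1 == a].
Qed.

Lemma alloc_of_catr h r a : a \notin agents_of h -> alloc_of (h ++ r) a = alloc_of r a.
Proof.
rewrite /alloc_of filter_cat map_cat => ha.
suff -> : [seq e <- h | e.1.1 == a] = [::] by [].
apply/eqP; rewrite -(negbK (_ == _)) -has_filter; apply/hasP => -[e he /eqP ea].
by move: ha; rewrite -ea (map_f (fun e => e.1.1) he).
Qed.

Lemma alloc_of_cons e r : alloc_of (e :: r) e.1.1 = Some e.1.2.
Proof. by rewrite /alloc_of /= eqxx. Qed.

Lemma alloc_of_plots r a q : alloc_of r a = Some q -> q \in plots_of r.
Proof.
rewrite /alloc_of; case Er: [seq e.1.2 | e <- r & e.1.1 == a] => [|x s] //= [<-].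
have : x \in [seq e.1.2 | e <- r & e.1.1 == a] by rewrite Er inE eqxx.
by case/mapP => e; rewrite mem_filter => /andP [_ he] ->; apply: map_f.
Qed.

Lemma size_agents_of h : size (agents_of h) = size h.
Proof. exact: size_map. Qed.

Lemma size_plots_of h : size (plots_of h) = size (agents_of h).
Proof. by rewrite !size_map. Qed.

Lemma mem_agents_rcons h a p o b :
  (b \in agents_of (rcons h (a, p, o))) = (b == a) || (b \in agents_of h).
Proof. by rewrite /agents_of map_rcons mem_rcons inE. Qed.

Lemma plots_of_cat h r : plots_of (h ++ r) = plots_of h ++ plots_of r.
Proof. exact: map_cat. Qed.

Lemma plots_of_rcons h a p o : plots_of (rcons h (a, p, o)) = rcons (plots_of h) p.
Proof. by rewrite /plots_of map_rcons. Qed.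

End Allocation.

Section Run.
Variables (N V : finType) (c : nat -> {set N} -> N) (pick : N -> hist N V -> V).
Hypothesis hNV : #|V| = #|N|.
Hypothesis hc : forall k S, S != set0 -> c k S \in S.
Hypothesis hpick : forall a h p, p \notin plots_of h -> pick a h \notin plots_of h.

Local Notation state := (hist N V * option N * nat)%type.
Local Notation step D := (ct_step c pick D).
Local Notation init := (([::], None, 0%N) : state).

Definition wf_state (st : state) : bool :=
  [&& uniq (agents_of st.1.1), uniq (plots_of st.1.1) &
      if st.1.2 is Some b then b \notin agents_of st.1.1 else true].

Definition accept_decl (R : {set N}) (a : N) (d : option N) : option N :=
  if d is Some b then if (b \in R) && (b != a) then Some b else None else None.

Definition drawn (i : N) (st : state) : bool :=
  [&& remaining st.1.1 != set0, st.1.2 == None & c st.2 (remaining st.1.1) == i].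

Lemma pick_fresh a h : uniq (agents_of h) -> uniq (plots_of h) ->
  remaining h != set0 -> pick a h \notin plots_of h.
Proof.
move=> ua up /set0Pn [b]; rewrite inE => hb.
have lt_card : (size (agents_of h) < #|N|)%N.
  by apply: (@uniq_size_le_card _ (b :: agents_of h)); rewrite /= hb ua.
case: (pickP (fun p => p \notin plots_of h)) => [p hp|used]; first exact: hpick hp.
have : (#|V| <= size (plots_of h))%N.
  rewrite cardE; apply: uniq_leq_size; first exact: enum_uniq.
  by move=> p _; move/negbFE: (used p).
by rewrite hNV size_plots_of; lia.
Qed.

Lemma wf_step D st : wf_state st -> wf_state (step D st).
Proof.
case: st => [[h pend] k]; rewrite /wf_state /= => /and3P [ua up hp].
case: ifP => [_|R0]; first by rewrite /= ua up hp.
have fresh a : pick a h \notin plots_of h by apply: pick_fresh; rewrite ?R0.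
case: pend hp => [a|] hp /=.
  by rewrite /agents_of /plots_of !map_rcons !rcons_uniq /= hp ua fresh up.
have := hc k (negbT R0); rewrite inE => ca.
rewrite /agents_of /plots_of !map_rcons !rcons_uniq /= -/(agents_of h) -/(plots_of h).
rewrite ca ua fresh up /=.
case: (D _ h _) => [b|] //; case: ifP => // /andP [hb hab] /=.
by rewrite mem_rcons inE negb_or hab; move: hb; rewrite inE.
Qed.

Lemma wf_iter D n st : wf_state st -> wf_state (iter n (step D) st).
Proof. by move=> wf; elim: n => //= n IH; apply: wf_step. Qed.

Lemma step_extends D st : exists r, (step D st).1.1 = st.1.1 ++ r.
Proof.
case: st => [[h pend] k] /=; case: ifP => _; first by exists [::]; rewrite cats0.
by case: pend => [a|] /=; eexists; rewrite -cats1.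
Qed.

Lemma iter_extends D n st : exists r, (iter n (step D) st).1.1 = st.1.1 ++ r.
Proof.
elim: n st => [|n IH] st; first by exists [::]; rewrite cats0.
rewrite iterSr; have [r1 ->] := IH (step D st); have [r2 ->] := step_extends D st.
by exists (r2 ++ r1); rewrite catA.
Qed.

Lemma size_iter_init D n :
  remaining (iter n (step D) init).1.1 != set0 -> size (iter n (step D) init).1.1 = n.
Proof.
elim: n => [|n IH] //=; move: IH; case: (iter n _ _) => [[h pend] k] /= IH.
case: ifP => [/eqP -> /=|R0]; first by rewrite eqxx.
by case: pend => [a|] /= _; rewrite size_rcons IH // R0.
Qed.

Lemma step_pending D h b k :
  b \in remaining h -> step D (h, Some b, k) = (rcons h (b, pick b h, None), None, k).
Proof. by rewrite /ct_step; case: ifP => // /eqP ->; rewrite inE. Qed.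

Lemma drawn_remaining i h k : drawn i (h, None, k) -> i \in remaining h.
Proof. by case/and3P => /= R0 _ /eqP <-; apply: hc. Qed.

Lemma step_drawn D i h k : drawn i (h, None, k) ->
  let d := accept_decl (remaining h) i (D i h (pick i h)) in
  step D (h, None, k) = (rcons h (i, pick i h, d), d, k.+1).
Proof. by case/and3P => /= /negPf R0 _ /eqP ci; rewrite /ct_step R0 ci. Qed.

Lemma step_undrawn D1 D2 i st : (forall a, a != i -> D1 a = D2 a) ->
  ~~ drawn i st -> step D1 st = step D2 st.
Proof.
move=> agree; case: st => [[h [b|]] k]; rewrite /drawn /ct_step //=.
by case: ifP => //= _ ne; rewrite agree.
Qed.

Lemma run_split D1 D2 i : (forall a, a != i -> D1 a = D2 a) ->
  on_ct_rsd c pick D1 = on_ct_rsd c pick D2 \/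
  exists h k m, [/\ drawn i (h, None, k), wf_state (h, None, k),
    (size h + m.+1)%N = #|N|,
    on_ct_rsd c pick D1 = (iter m.+1 (step D1) (h, None, k)).1.1 &
    on_ct_rsd c pick D2 = (iter m.+1 (step D2) (h, None, k)).1.1].
Proof.
move=> agree; rewrite /on_ct_rsd.
have agree_off := fun st => step_undrawn (st := st) agree.
have [->|[t [m [-> e hit]]]] := iter_eq_or_hit agree_off #|N| init; first by left.
right; move: hit (wf_iter D1 t (st := init) isT) (@size_iter_init D1 t).
rewrite !iterD !iterS -e -!iterSr; case: (iter t _ init) => [[h pend] k] hit wf hsize.
have pend0 : pend = None by case/and3P: hit => _ /eqP.
subst pend; exists h, k, m; split => //.
by case/and3P: (hit) => R0 _ _; move: (hsize R0) => /= ->; lia.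
Qed.

Lemma alloc_placed D n st j :
  j \in agents_of st.1.1 -> alloc_of (iter n (step D) st).1.1 j = alloc_of st.1.1 j.
Proof. by have [r ->] := iter_extends D n st; apply: alloc_of_catl. Qed.

Lemma alloc_drawn D i h k m :
  drawn i (h, None, k) -> alloc_of (iter m.+1 (step D) (h, None, k)).1.1 i = Some (pick i h).
Proof.
move=> dr; have := drawn_remaining dr; rewrite inE => ih.
rewrite iterSr alloc_placed (step_drawn D dr) /= ?mem_agents_rcons ?eqxx //.
by rewrite -cats1 alloc_of_catr //; apply: alloc_of_cons.
Qed.

Lemma alloc_drawn_fresh D i h k m j q o :
  wf_state (h, None, k) -> drawn i (h, None, k) -> j != i -> j \notin agents_of h ->
  alloc_of (iter m.+1 (step D) (h, None, k)).1.1 j = Some q ->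
  q \notin plots_of (rcons h (i, pick i h, o)).
Proof.
move=> wf dr ji jh; have := wf_iter D m.+1 wf; rewrite iterSr /wf_state.
have [r ->] := iter_extends D m (step D (h, None, k)); rewrite (step_drawn D dr) /=.
case/and3P => _ + _; rewrite plots_of_cat cat_uniq !plots_of_rcons => /and3P [_ disj _].
rewrite alloc_of_catr ?mem_agents_rcons ?negb_or ?ji // => /alloc_of_plots qr.
by apply: contra disj => qh; apply/hasP; exists q.
Qed.

Lemma alloc_declared_next D i j h k m :
  drawn i (h, None, k) -> accept_decl (remaining h) i (D i h (pick i h)) = Some j ->
  alloc_of (iter m.+2 (step D) (h, None, k)).1.1 j
    = Some (pick j (rcons h (i, pick i h, Some j))).
Proof.
move=> dr acc; have jfree : j \notin agents_of (rcons h (i, pick i h, Some j)).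
  move: acc; rewrite /accept_decl; case: (D i h _) => [b|] //.
  by case: ifP => // /andP [+ ji] [<-]; rewrite inE mem_agents_rcons negb_or ji.
rewrite !iterSr (step_drawn D dr) acc step_pending; last by rewrite inE.
rewrite alloc_placed /= ?mem_agents_rcons ?eqxx //.
by rewrite -cats1 alloc_of_catr //; apply: alloc_of_cons.
Qed.

End Run.

Lemma accept_truthful (N V : finType) (F : rel N) i j (h : hist N V) p :
  F i j -> (forall b, F i b -> b = j) -> j != i -> j \notin agents_of h ->
  accept_decl (remaining h) i (truthful_decl F i h p) = Some j.
Proof.
move=> Fij uniq_j ji jh; rewrite /truthful_decl.
case: pickP => [b /andP [/uniq_j -> _]|/(_ j)]; last by rewrite Fij jh.
by rewrite /accept_decl inE jh ji.
Qed.

Local Open Scope ring_scope.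

Lemma myopic_after_friend (N V : finType) (u : N -> V -> rat) (F : rel N)
    (phi : N -> N -> rat) (E : rel V) i j (h : hist N V) p o q :
  F j i -> (forall b, F j b -> b = i) -> i \notin agents_of h ->
  myopic u F phi E j (rcons h (i, p, o)) q = u j q + phi j i * (E q p)%:R.
Proof.
move=> Fji uniq_i ih; rewrite /myopic big_rcons /= Fji big1_seq ?add0r //.
by move=> e /andP [/uniq_i ei eh]; move: ih; rewrite -ei (map_f (fun e => e.1.1) eh).
Qed.

Lemma bonus_dominates (R : realDomainType) (u1 u2 w : R) (b1 b2 : bool) :
  0 <= u1 <= 1 -> 0 <= u2 <= 1 -> 1 < w -> u1 + w * b1%:R <= u2 + w * b2%:R -> b1 -> b2.
Proof. by case: b1 b2 => [] [] //= + + + + _; lra. Qed.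

Lemma U_le_same_plot (N V : finType) (u : N -> V -> rat) (F : rel N)
    (phi : N -> N -> rat) (E : rel V) (A1 A2 : N -> option V) i p :
  (forall j, F i j -> 0 <= phi i j) -> A1 i = Some p -> A2 i = Some p ->
  (forall j, F i j -> (if A1 j is Some q then E p q else false) ==>
                      (if A2 j is Some q then E p q else false)) ->
  U u F phi E A1 i <= U u F phi E A2 i.
Proof.
move=> phi0 A1i A2i adj12; rewrite /U A1i A2i lerD2l; apply: ler_sum => j Fij.
apply: ler_wpM2l; first exact: phi0.
move: (adj12 j Fij); case: (A1 j) => [q1|]; case: (A2 j) => [q2|] //=.
- by case: (E p q1); case: (E p q2).
by case: (E p q1).
Qed.

Theorem theorem4p6 (N V : finType) (E : rel V) (u : N -> V -> rat)
  (F : rel N) (phi : N -> N -> rat)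
  (hNV : #|V| = #|N|) (hE : symmetric E)
  (hu : forall a p, 0 <= u a p <= 1)
  (hFrec : forall a b, F a b = F b a) (hFirr : irreflexive F)
  (hphi0 : forall a b, 0 <= phi a b)
  (hphimin : forall a b, F a b -> 1 < phi a b)
  (hdeg : forall a, (#|[set b | F a b]| <= 1)%N)
  (c : nat -> {set N} -> N) (hc : forall k S, S != set0 -> c k S \in S)
  (pick : N -> hist N V -> V)
  (hpick : forall a h p, p \notin plots_of h -> pick a h \notin plots_of h)
  (decl : N -> hist N V -> V -> option N)
  (i : N)
  (hrat : forall j, F i j -> forall (h : hist N V) q, q \notin plots_of h ->
            myopic u F phi E j h q <= myopic u F phi E j h (pick j h))
  (dev : hist N V -> V -> option N) :
  U u F phi E (alloc_of (on_ct_rsd c pick (fun a => if a == i then dev else decl a))) i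
  <= U u F phi E (alloc_of (on_ct_rsd c pick
                   (fun a => if a == i then truthful_decl F i else decl a))) i.
Proof.
have friend_uniq a b b' : F a b -> F a b' -> b = b'.
  by move=> Fab Fab'; apply: (card_le1_eqP (hdeg a)); rewrite inE.
set D1 := fun a => if a == i then dev else decl a.
set D2 := fun a => if a == i then truthful_decl F i else decl a.
have agree a : a != i -> D1 a = D2 a by rewrite /D1 /D2 => /negPf ->.
have [-> // | [h [k [m [dr wf hsize -> ->]]]]] := run_split hNV hc hpick agree.
have ih : i \notin agents_of h by have := drawn_remaining hc dr; rewrite inE.
apply: (U_le_same_plot u (fun j _ => hphi0 i j) (alloc_drawn _ hc _ _ dr)
                                             (alloc_drawn _ hc _ _ dr)).
move=> j Fij.
have ji : j != i by apply: contraTneq Fij => ->; rewrite hFirr.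
have [jh|jh] := boolP (j \in agents_of h); first by rewrite !alloc_placed ?implybb.
have m_pos : (0 < m)%N.
  case/and3P: wf => /= ua _ _.
  have := @uniq_size_le_card _ (i :: j :: agents_of h).
  by rewrite /= inE negb_or eq_sym ji ih jh ua size_agents_of -hsize => /(_ isT); lia.
rewrite -(prednK m_pos) (alloc_declared_next (D := D2) _ dr); last first.
  by rewrite /D2 /= eqxx; apply: accept_truthful => // b /friend_uniq; apply.
case A1: alloc_of => [q1|] //; apply/implyP => adj1.
have Fji : F j i by rewrite hFrec.
have only_i b : F j b -> b = i by move/friend_uniq; apply.
have := hrat j Fij _ _ (alloc_drawn_fresh hNV hc hpick (Some j) wf dr ji jh A1).
rewrite !myopic_after_friend // hE [E _ (pick i h)]hE => my.
exact: (bonus_dominates (hu j q1) (hu j _) (hphimin _ _ Fji) my).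
Qed.
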